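(* Consider the RLC circuit $-L\dot I=\Gamma V+RI-Bu_s$, $C\dot V=\Gamma^\top I-GV$ and its extended dynamics (obtained by adjoining the time-differentiated equations $-L\ddot I=\Gamma\dot V+R\dot I-B\upsilon_s$, $C\ddot V=\Gamma^\top\dot I-G\dot V$ and $\dot u_s=\upsilon_s$), with extended state $(I,V,\dot I,\dot V,u_s)$ and input $\upsilon_s\in\mathbb{R}^m$. Assume: $L,C$ constant symmetric positive definite; $R,G$ symmetric positive semi-definite; $I,V$ (and $\dot I,\dot V$) are measured; and there exist a constant $V^\star\in\mathbb{R}^\rho_+$, a constant $\bar u_s\in\mathbb{R}^m$ and $\bar I\in\mathbb{R}^\sigma$ with $0=\Gamma V^\star+R\bar I-B\bar u_s$, $0=\Gamma^\top\bar I-GV^\star$. Apply the control $$\upsilon_s=\mu_s-k_iB^\top(I-\bar I)-k_dy_s,\qquad y_s=B^\top\dot I,$$ with scalars $k_d>0$, $k_i>0$ and new input $\mu_s\in\mathbb{R}^m$. Then: (a) the closed-loop system defines a passive map $\mu_s\mapsto y_s$; (b) if $\mu_s=0$ and either (i) $R>0$ and $G>0$, or (ii) $G>0$ and $\Gamma^\top$ has full column rank, then the solution of the closed-loop system asymptotically converges to the set $$\{(I,V,\dot I,\dot V,u_s):\ \dot V=0,\ \dot I=0,\ \dot u_s=0,\ B^\top(I-\bar I)=0\}.$$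
   Context: $I\in\mathbb{R}^\sigma$, $V\in\mathbb{R}^\rho$, $u_s\in\mathbb{R}^m$; $\Gamma\in\mathbb{R}^{\sigma\times\rho}$; $B\in\mathbb{R}^{\sigma\times m}$ has full column rank. A map $\mu\mapsto y$ is passive if there is a storage function $S\ge0$ of the (closed-loop) state with $\dot S\le\mu^\top y$ along trajectories. $R>0$ means symmetric positive definite. *)

From HB Require Import structures.
From mathcomp Require Import all_boot all_order all_algebra.
From mathcomp Require Import all_classical all_reals all_analysis.
Set Implicit Arguments. Unset Strict Implicit. Unset Printing Implicit Defensive.
Import Order.TTheory GRing.Theory Num.Theory.
Import numFieldNormedType.Exports.
Local Open Scope ring_scope.
Local Open Scope classical_set_scope.

Definition posdef (R : realType) n (A : 'M[R]_n) : Prop :=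
  A^T = A /\ forall x : 'cV[R]_n, x != 0 -> 0 < (x^T *m A *m x) 0 0.
Definition psd (R : realType) n (A : 'M[R]_n) : Prop :=
  A^T = A /\ forall x : 'cV[R]_n, 0 <= (x^T *m A *m x) 0 0.

(* Extended state (I, V, Idot, Vdot, u_s), as nested pairs
   ((((I, V), Idot), Vdot), u_s). *)
Definition ext_state (R : realType) (s r m : nat) : Type :=
  ('cV[R]_s * 'cV[R]_r * 'cV[R]_s * 'cV[R]_r * 'cV[R]_m)%type.

Section Proj.
Context {R : realType} {s r m : nat}.
Definition stI (z : ext_state R s r m) : 'cV[R]_s := z.1.1.1.1.
Definition stV (z : ext_state R s r m) : 'cV[R]_r := z.1.1.1.2.
Definition stId (z : ext_state R s r m) : 'cV[R]_s := z.1.1.2.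
Definition stVd (z : ext_state R s r m) : 'cV[R]_r := z.1.2.
Definition stus (z : ext_state R s r m) : 'cV[R]_m := z.2.
End Proj.

Definition ctrl (R : realType) (s r m : nat) (B : 'M[R]_(s, m))
  (Ibar : 'cV[R]_s) (ki kd : R) (mu : 'cV[R]_m) (z : ext_state R s r m)
  : 'cV[R]_m :=
  mu - ki *: (B^T *m (stI z - Ibar)) - kd *: (B^T *m stId z).

Definition out_ys (R : realType) (s r m : nat) (B : 'M[R]_(s, m))
  (z : ext_state R s r m) : 'cV[R]_m := B^T *m stId z.

Definition closed_loop (R : realType) (s r m : nat)
  (L Rm : 'M[R]_s) (C G : 'M[R]_r) (Gam : 'M[R]_(s, r)) (B : 'M[R]_(s, m))
  (Ibar : 'cV[R]_s) (ki kd : R) (mu : R -> 'cV[R]_m)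
  (x : R -> ext_state R s r m) : Prop :=
  let I := stI \o x in let V := stV \o x in let Id := stId \o x in
  let Vd := stVd \o x in let us := stus \o x in
  forall t : R, 0 < t ->
    [/\ derivable I t 1, derivable V t 1, derivable Id t 1,
        derivable Vd t 1 & derivable us t 1] /\
    [/\ derive1 I t = Id t, derive1 V t = Vd t,
        - (L *m derive1 I t) = Gam *m V t + Rm *m I t - B *m us t &
        C *m derive1 V t = Gam^T *m I t - G *m V t] /\
    [/\ - (L *m derive1 Id t) = Gam *m Vd t + Rm *m Id t
                             - B *m ctrl B Ibar ki kd (mu t) (x t),
        C *m derive1 Vd t = Gam^T *m Id t - G *m Vd t &
        derive1 us t = ctrl B Ibar ki kd (mu t) (x t)].

Definition cl_passive (R : realType) (s r m : nat)
  (L Rm : 'M[R]_s) (C G : 'M[R]_r) (Gam : 'M[R]_(s, r)) (B : 'M[R]_(s, m))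
  (Ibar : 'cV[R]_s) (ki kd : R) : Prop :=
  exists S : ext_state R s r m -> R,
    (forall z, 0 <= S z) /\
    forall (mu : R -> 'cV[R]_m) (x : R -> ext_state R s r m),
      closed_loop L Rm C G Gam B Ibar ki kd mu x ->
      forall t : R, 0 < t ->
        derivable (S \o x) t 1 /\
        derive1 (S \o x) t <= ((mu t)^T *m out_ys B (x t)) 0 0.

(* The target set {Vdot = 0, Idot = 0, d/dt u_s = 0, B^T (I - Ibar) = 0},
   where (with mu_s = 0) d/dt u_s is given by the closed-loop law. *)
Definition target_set (R : realType) (s r m : nat) (B : 'M[R]_(s, m))
  (Ibar : 'cV[R]_s) (ki kd : R) : set (ext_state R s r m) :=
  [set z | [/\ stVd z = 0, stId z = 0, ctrl B Ibar ki kd 0 z = 0 &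
               B^T *m (stI z - Ibar) = 0]].

Definition converges_to_set (R : realType) (T : pseudoMetricType R)
  (x : R -> T) (A : set T) : Prop :=
  forall e : R, 0 < e ->
    exists t0 : R, forall t : R, t0 <= t -> exists2 a, A a & ball a e (x t).

(* With the storage S = (İᵀLİ + V̇ᵀCV̇ + k_i |Bᵀ(I - Ī)|²)/2 of the extended
   state, the circuit equations give dS/dt = -D + μᵀy with the dissipation
   D = İᵀRİ + V̇ᵀGV̇ + k_d |Bᵀİ|² ≥ 0, which is passivity.  For μ = 0, S is
   nonincreasing and nonnegative, hence convergent, and it bounds İ, V̇ and
   Bᵀ(I - Ī); through the equations Ï and V̈ are bounded too, so D is uniformly
   Lipschitz and Barbalat's lemma gives D → 0.  Thus V̇ → 0 (G > 0), and İ → 0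
   either directly (R > 0) or because Barbalat applied to V̇ gives V̈ → 0, so
   Γᵀİ = CV̈ + GV̇ → 0.  Barbalat applied to İ gives Ï → 0, so B u_s → 0 by
   the circuit equation; as B has full column rank, u_s → 0 and then
   Bᵀ(I - Ī) = -(u_s + k_d Bᵀİ)/k_i → 0. *)

From HB Require Import structures.
From mathcomp Require Import all_boot all_order all_algebra.
From mathcomp Require Import all_classical all_reals all_analysis.
From mathcomp Require Import ring lra.
Set Implicit Arguments. Unset Strict Implicit. Unset Printing Implicit Defensive.
Import Order.TTheory GRing.Theory Num.Theory.
Import numFieldNormedType.Exports.
Local Open Scope ring_scope.
Local Open Scope classical_set_scope.

Section QuadraticForm.
Variable R : comNzRingType.

Lemma qformE n p (a : 'cV[R]_n) (M : 'M[R]_(n, p)) (b : 'cV[R]_p) :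
  (a^T *m M *m b) 0 0 = \sum_(j < p) \sum_(i < n) a i 0 * M i j * b j 0.
Proof.
rewrite mxE; apply: eq_bigr => j _; rewrite mxE big_distrl /=.
by apply: eq_bigr => i _; rewrite mxE.
Qed.

Lemma qform_swap n p (a : 'cV[R]_n) (M : 'M[R]_(n, p)) (b : 'cV[R]_p) :
  (a^T *m M *m b) 0 0 = (b^T *m M^T *m a) 0 0.
Proof.
have trmx00 (A : 'M[R]_1) : A^T 0 0 = A 0 0 by rewrite mxE.
by rewrite -trmx00 !trmx_mul trmxK mulmxA.
Qed.

Lemma qform_mulmx_tr n p (A : 'M[R]_(n, p)) (e : 'cV[R]_n) :
  (e^T *m (A *m A^T) *m e) 0 0 = ((A^T *m e)^T *m (A^T *m e)) 0 0.
Proof. by rewrite trmx_mul trmxK !mulmxA. Qed.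

End QuadraticForm.

Section MatrixNorm.
Variable R : realFieldType.

Lemma mx_norm_entry_le m n (A : 'M[R]_(m, n)) i j : `|A i j| <= `|A|.
Proof.
by rewrite [leRHS]/Num.Def.normr /= mx_normrE; exact: (le_bigmax _ _ (i, j)).
Qed.

Lemma mx_norm_le m n (A : 'M[R]_(m, n)) c :
  0 <= c -> (forall i j, `|A i j| <= c) -> `|A| <= c.
Proof.
move=> c0 Ac; rewrite [leLHS]/Num.Def.normr /= mx_normrE.
by apply: bigmax_le => // -[i j] _.
Qed.

Lemma mx_norm_trmx m n (A : 'M[R]_(m, n)) : `|A^T| = `|A|.
Proof.
apply/eqP; rewrite eq_le !mx_norm_le // => i j; rewrite ?mxE.
  by have := mx_norm_entry_le A^T j i; rewrite mxE.
exact: mx_norm_entry_le.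
Qed.

Lemma mx_norm_mulmx_le m n p (A : 'M[R]_(m, n)) (B : 'M[R]_(n, p)) :
  `|A *m B| <= (`|A| * `|B|) *+ n.
Proof.
apply: mx_norm_le => [|i j]; first by rewrite mulrn_wge0 // mulr_ge0.
rewrite mxE (le_trans (ler_norm_sum _ _ _)) //.
rewrite -[n in _ *+ n]card_ord -sumr_const; apply: ler_sum => k _.
by rewrite normrM ler_pM // mx_norm_entry_le.
Qed.

Lemma qform_norm_le n p (a : 'cV[R]_n) (M : 'M[R]_(n, p)) (b : 'cV[R]_p) :
  `|(a^T *m M *m b) 0 0| <= `|M| *+ (n * p) * (`|a| * `|b|).
Proof.
rewrite (le_trans (mx_norm_entry_le _ _ _)) // (le_trans (mx_norm_mulmx_le _ _)) //.
have aM := mx_norm_mulmx_le a^T M; rewrite mx_norm_trmx in aM.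
rewrite mulrnAl mulrnA lerMn2r (le_trans (ler_wpM2r _ aM)) ?orbT //.
by rewrite mulrnAl mulrA [`|a| * _]mulrC.
Qed.

Lemma sqr_mx_norm_le_dot n (x : 'cV[R]_n) : `|x| ^+ 2 <= (x^T *m x) 0 0.
Proof.
have [x0|/mx_norm_neq0 [[i j] /= xij]] := eqVneq (mx_norm x) 0.
  by rewrite [`|x|]x0 expr0n /= mxE sumr_ge0 // => k _; rewrite !mxE -expr2 sqr_ge0.
rewrite [`|x|]xij (ord1 j) mxE (bigD1 i) //= !mxE -expr2 real_normK ?num_real //.
by rewrite lerDl sumr_ge0 // => k _; rewrite !mxE -expr2 sqr_ge0.
Qed.

Lemma dot_ge0 n (v : 'cV[R]_n) : 0 <= (v^T *m v) 0 0.
Proof. exact: le_trans (sqr_ge0 _) (sqr_mx_norm_le_dot v). Qed.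

End MatrixNorm.

Section PositiveDefinite.
Variables (R : realType) (n : nat) (P : 'M[R]_n).
Hypothesis Ppos : posdef P.

Lemma posdef_unitmx : P \in unitmx.
Proof.
have [_ Pp] := Ppos; rewrite -row_free_unit; apply: inj_row_free => v vP.
apply/eqP/negPn/negP => v0.
have vT0 : v^T != 0 by rewrite -(inj_eq (@trmx_inj _ _ _)) trmxK trmx0.
by have := Pp _ vT0; rewrite trmxK vP mul0mx mxE ltxx.
Qed.

Lemma posdef_psd : psd P.
Proof.
have [Ps Pp] := Ppos; split => // x.
by have [->|/Pp/ltW //] := eqVneq x 0; rewrite mulmx0 mxE.
Qed.

Lemma posdef_sqr_norm_le :
  exists2 c, 0 < c & forall x : 'cV[R]_n, c * `|x| ^+ 2 <= (x^T *m P *m x) 0 0.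
Proof.
have [Psym _] := Ppos; have [_ Ppsd] := posdef_psd.
pose K := `|(invmx P)^T| *+ (n * n); have K0 : 0 <= K by rewrite mulrn_wge0.
pose s := (K + 1)^-1; have s0 : 0 < s by rewrite invr_gt0 ltr_wpDl.
have K1 : 0 < K + 1 by rewrite ltr_wpDl.
have sK1 : s * (K + 1) = 1 by rewrite mulVf // lt0r_neq0.
have sK : s * K = 1 - s by rewrite -sK1 mulrDr mulr1 addrK.

exists s => // x; pose y := invmx P *m x.
have Py : P *m y = x by rewrite mulKVmx // posdef_unitmx.
have yP : y^T *m P = x^T by rewrite -[P in y^T *m P]Psym -trmx_mul Py.
(* 0 <= (x - s y)^T P (x - s y) = x^T P x - 2 s x^T x + s^2 x^T P^-T x *)
have := Ppsd (x - s *: y).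
rewrite [(x - _)^T]linearB /= [(_ *: y)^T]linearZ /= !(mulmxBl, mulmxBr).
rewrite -!(scalemxAl, scalemxAr) -!mulmxA Py [y^T *m (P *m x)]mulmxA yP.
rewrite /y trmx_mul mulmxA.
set xPx := x^T *m P *m x; set d := x^T *m x; set q := x^T *m (invmx P)^T *m x.
have dx : `|x| ^+ 2 <= d 0 0 := sqr_mx_norm_le_dot x.
have qK : q 0 0 <= K * `|x| ^+ 2.
  by rewrite expr2 (le_trans (ler_norm _)) // qform_norm_le.
clearbody xPx d q; rewrite !mxE => qpos.
have sq : s ^+ 2 * q 0 0 <= s * (1 - s) * `|x| ^+ 2.
  apply: le_trans (ler_wpM2l (exprn_ge0 2 (ltW s0)) qK) _.
  by rewrite -sK expr2 !mulrA.
nra.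
Qed.

End PositiveDefinite.

Section Tail.
Variable R : realType.

(* Trajectories are only defined for t > 0 and the storage may blow up as
   t -> 0+, so all bounds are taken on the tail [1, +oo[. *)
Definition bounded_tail (V : normedModType R) (f : R -> V) :=
  exists M, forall t, 1 <= t -> `|f t| <= M.

Definition lipschitz_tail (V : normedModType R) (f : R -> V) :=
  exists k, forall u v, 1 <= u -> u <= v -> `|f v - f u| <= k * (v - u).

Context {V : normedModType R}.
Implicit Types f g : R -> V.

Lemma bounded_tailD f g :
  bounded_tail f -> bounded_tail g -> bounded_tail (fun t => f t + g t).
Proof.
move=> [M fM] [N gN]; exists (M + N) => t t1.
by rewrite (le_trans (ler_normD _ _)) // lerD // ?fM ?gN.
Qed.

Lemma bounded_tailN f : bounded_tail f -> bounded_tail (fun t => - f t).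
Proof. by move=> [M fM]; exists M => t t1; rewrite normrN fM. Qed.

Lemma bounded_tailZ c f : bounded_tail f -> bounded_tail (fun t => c *: f t).
Proof.
move=> [M fM]; exists (`|c| * M) => t t1.
by rewrite normrZ ler_wpM2l // fM.
Qed.

Lemma bounded_tail_sqr f c M :
  0 < c -> (forall t, 1 <= t -> c * `|f t| ^+ 2 <= M) -> bounded_tail f.
Proof.
move=> c0 fM; exists (1 + M / c) => t t1.
have f2 : `|f t| ^+ 2 <= M / c by rewrite ler_pdivlMr // mulrC fM.
have := normr_ge0 (f t); rewrite expr2 in f2; nra.
Qed.

Lemma lipschitz_tail_cst (a : V) : lipschitz_tail (fun=> a).
Proof. by exists 0 => u v _ _; rewrite subrr normr0 mul0r. Qed.

Lemma lipschitz_tailD f g :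
  lipschitz_tail f -> lipschitz_tail g -> lipschitz_tail (fun t => f t + g t).
Proof.
move=> [k fk] [l gl]; exists (k + l) => u v u1 uv.
rewrite opprD addrACA mulrDl (le_trans (ler_normD _ _)) //.
by rewrite lerD // ?fk ?gl.
Qed.

Lemma lipschitz_tailN f : lipschitz_tail f -> lipschitz_tail (fun t => - f t).
Proof. by move=> [k fk]; exists k => u v u1 uv; rewrite -opprD normrN fk. Qed.

Lemma lipschitz_tailZ c f :
  lipschitz_tail f -> lipschitz_tail (fun t => c *: f t).
Proof.
move=> [k fk]; exists (`|c| * k) => u v u1 uv.
by rewrite -scalerBr normrZ -mulrA ler_wpM2l // fk.
Qed.

End Tail.

Section TailMatrix.
Variable R : realType.

Lemma bounded_tail_mulmx m n p (A : 'M[R]_(m, n)) (f : R -> 'M[R]_(n, p)) :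
  bounded_tail f -> bounded_tail (fun t => A *m f t).
Proof.
move=> [M fM]; exists ((`|A| * M) *+ n) => t t1.
by rewrite (le_trans (mx_norm_mulmx_le _ _)) // lerMn2r ler_wpM2l ?fM ?orbT.
Qed.

Lemma lipschitz_tail_mulmx m n p (A : 'M[R]_(m, n)) (f : R -> 'M[R]_(n, p)) :
  lipschitz_tail f -> lipschitz_tail (fun t => A *m f t).
Proof.
move=> [k fk]; exists ((`|A| * k) *+ n) => u v u1 uv.
rewrite -mulmxBr (le_trans (mx_norm_mulmx_le _ _)) // mulrnAl -mulrA.
by rewrite lerMn2r ler_wpM2l ?fk ?orbT.
Qed.

Lemma lipschitz_tail_qform n p (a : R -> 'cV[R]_n) (M : 'M[R]_(n, p))
    (b : R -> 'cV[R]_p) :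
  bounded_tail a -> lipschitz_tail a -> bounded_tail b -> lipschitz_tail b ->
  lipschitz_tail (fun t => ((a t)^T *m M *m b t) 0 0).
Proof.
move=> [A aA] [ka aka] [B bB] [kb bkb]; set K := `|M| *+ (n * p).
exists (K * (ka * B + A * kb)) => u v u1 uv.
have -> : ((a v)^T *m M *m b v) 0 0 - ((a u)^T *m M *m b u) 0 0 =
    ((a v - a u)^T *m M *m b v) 0 0 + ((a u)^T *m M *m (b v - b u)) 0 0.
  by rewrite linearB /= !mulmxBl !mulmxBr !mxE; ring.
have v1 : 1 <= v by exact: le_trans uv.
have K0 : 0 <= K by rewrite mulrn_wge0.
rewrite (le_trans (ler_normD _ _)) //.
apply: le_trans (lerD (qform_norm_le _ _ _) (qform_norm_le _ _ _)) _.
rewrite -mulrDr -mulrA ler_wpM2l // mulrDl lerD //.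
  by rewrite mulrAC ler_pM ?aka ?bB.
by rewrite -mulrA ler_pM ?aA ?bkb.
Qed.

Lemma lipschitz_tail_mx_entry m n (f : R -> 'M[R]_(m, n)) i j :
  lipschitz_tail f -> lipschitz_tail (fun t => f t i j).
Proof.
move=> [k fk]; exists k => u v u1 uv.
have := mx_norm_entry_le (f v - f u) i j; rewrite !mxE => fvu.
exact: le_trans fvu (fk _ _ u1 uv).
Qed.

End TailMatrix.

Section Derivatives.
Variable R : realType.

Lemma is_derive_mx_entry m n (f : R -> 'M[R]_(m, n)) (df : 'M[R]_(m, n)) (t : R)
    i j :
  is_derive t 1 f df -> is_derive t 1 (fun u => f u i j) (df i j).
Proof.
move=> [fd <-]; apply: DeriveDef; first exact: (derivable_mxP f t 1).1 fd i j.
by rewrite (derive_mx fd) mxE.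
Qed.

Lemma is_derive_qform n p (f : R -> 'cV[R]_n) (df : 'cV[R]_n) (M : 'M[R]_(n, p))
    (g : R -> 'cV[R]_p) (dg : 'cV[R]_p) (t : R) :
  is_derive t 1 f df -> is_derive t 1 g dg ->
  is_derive t 1 (fun u => ((f u)^T *m M *m g u) 0 0)
    ((df^T *m M *m g t + (f t)^T *m M *m dg) 0 0).
Proof.
move=> fd gd.
have dfg j i : is_derive t 1 (fun u => f u i 0 * M i j * g u j 0)
    (df i 0 * M i j * g t j 0 + f t i 0 * M i j * dg j 0).
  have := is_deriveM (is_deriveM (is_derive_mx_entry i 0 fd)
    (is_derive_cst (M i j) t 1)) (is_derive_mx_entry j 0 gd).
  move=> dfgij; apply: is_derive_eq; rewrite /= scaler0 add0r.
  rewrite -[LHS]/(f t i 0 * M i j * dg j 0 + g t j 0 * (M i j * df i 0)).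
  ring.
have -> : (fun u => ((f u)^T *m M *m g u) 0 0) =
    \sum_(j < p) \sum_(i < n) (fun u => f u i 0 * M i j * g u j 0).
  apply/funext => u; rewrite qformE fct_sumE.
  by apply: eq_bigr => j _; rewrite fct_sumE.
have := is_derive_sum (fun j => is_derive_sum (dfg j)).
move=> dsum; apply: is_derive_eq.
rewrite mxE !qformE -big_split; apply: eq_bigr => j _.
by rewrite -big_split.
Qed.

Lemma MVT_closed_segment (f f' : R -> R) (u v : R) : u <= v ->
  (forall t, u <= t <= v -> is_derive t 1 f (f' t)) ->
  exists2 c, u <= c <= v & f v - f u = f' c * (v - u).
Proof.
move=> uv df; have [||c] := @MVT_segment R f f' u v uv.
- by move=> t; rewrite in_itv /= => /andP[/ltW ut /ltW tv]; apply: df; rewrite ut.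
- apply: derivable_within_continuous => t; rewrite in_itv /= => utv.
  by have [] := df t utv.
- by rewrite in_itv /=; exists c.
Qed.

Lemma derive_le0_nonincreasing_tail (f f' : R -> R) :
  (forall t : R, 1 <= t -> is_derive t 1 f (f' t)) ->
  (forall t, 1 <= t -> f' t <= 0) ->
  forall u v, 1 <= u -> u <= v -> f v <= f u.
Proof.
move=> df f'0 u v u1 uv.
have [|c /andP[uc _] fc] := MVT_closed_segment (f := f) (f' := f') uv.
  by move=> t /andP[ut _]; apply: df; exact: le_trans ut.
by rewrite -subr_le0 fc mulr_le0_ge0 ?subr_ge0 // f'0 // (le_trans u1).
Qed.

Lemma lipschitz_tail_derive m n (f f' : R -> 'M[R]_(m, n)) :
  (forall t : R, 1 <= t -> is_derive t 1 f (f' t)) -> bounded_tail f' ->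
  lipschitz_tail f.
Proof.
move=> df [M f'M]; exists M => u v u1 uv.
have M0 : 0 <= M by exact: le_trans (normr_ge0 _) (f'M _ (lexx 1)).
apply: mx_norm_le => [|i j]; first by rewrite mulr_ge0 // subr_ge0.
have [|c /andP[uc _] fc] := MVT_closed_segment (f := fun t => f t i j)
    (f' := fun t => f' t i j) uv.
  by move=> t /andP[ut _]; apply: is_derive_mx_entry; apply: df; exact: le_trans ut.
rewrite /= in fc; rewrite !mxE fc normrM [`|v - u|]ger0_norm ?subr_ge0 //.
apply: ler_wpM2r; first by rewrite subr_ge0.
by rewrite (le_trans (mx_norm_entry_le _ _ _)) // f'M // (le_trans u1).
Qed.

End Derivatives.

Section Asymptotics.
Variable R : realType.

Lemma cvg0_mulmx T (F : set_system T) {FF : Filter F} m n p (A : 'M[R]_(m, n))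
    (f : T -> 'M[R]_(n, p)) :
  f @ F --> (0 : 'M[R]_(n, p)) -> A *m f x @[x --> F] --> (0 : 'M[R]_(m, p)).
Proof.
move=> /cvgr0Pnorm_le f0; apply/cvgr0Pnorm_le => e e0.
pose K := `|A| *+ n + 1; have K0 : 0 < K by rewrite ltr_wpDl // mulrn_wge0.
apply: filterS (f0 _ (divr_gt0 e0 K0)) => x fx.
rewrite (le_trans (mx_norm_mulmx_le _ _)) // -mulrnAl.
apply: le_trans (ler_wpM2l (mulrn_wge0 _ (normr_ge0 A)) fx) _.
by rewrite mulrCA ler_piMr ?(ltW e0) // ler_pdivrMr // mul1r lerDl.
Qed.

Lemma cvg0_mx_entry T (F : set_system T) {FF : Filter F} m n
    (f : T -> 'M[R]_(m, n)) i j :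
  f @ F --> (0 : 'M[R]_(m, n)) -> f x i j @[x --> F] --> (0 : R).
Proof.
move=> /cvgr0Pnorm_le f0; apply/cvgr0Pnorm_le => e /f0; apply: filterS => x.
exact: le_trans (mx_norm_entry_le _ _ _).
Qed.

Lemma cvg0_mx T (F : set_system T) {FF : Filter F} m n (f : T -> 'M[R]_(m, n)) :
  (forall i j, f x i j @[x --> F] --> (0 : R)) -> f @ F --> (0 : 'M[R]_(m, n)).
Proof.
move=> f0; apply/cvgr0Pnorm_le => e e0.
have : \forall x \near F, forall ij : 'I_m * 'I_n, `|f x ij.1 ij.2| <= e.
  by apply: filter_forall => -[i j]; exact: (cvgr0Pnorm_le _).1 (f0 i j) e e0.
apply: filterS => x fe.
by apply: mx_norm_le => [|i j]; [exact: ltW | exact: fe (i, j)].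
Qed.

Lemma cvg0_sqr_norm_le (V : normedModType R) (f : R -> V) (g : R -> R) c :
  0 < c -> (forall t, 1 <= t -> c * `|f t| ^+ 2 <= g t) ->
  g t @[t --> +oo] --> 0 -> f t @[t --> +oo] --> 0.
Proof.
move=> c0 fg /cvgr0Pnorm_le g0; apply/cvgr0Pnorm_le => e e0.
have ce0 : 0 < c * e ^+ 2 by rewrite mulr_gt0 // exprn_gt0.
near=> t.
have t1 : 1 <= t by near: t; exact: nbhs_pinfty_ge.
have gt : `|g t| <= c * e ^+ 2 by near: t; exact: g0.
have fe : `|f t| ^+ 2 <= e ^+ 2.
  rewrite -(ler_pM2l c0) (le_trans (fg t t1)) //.
  exact: le_trans (ler_norm _) gt.
by rewrite -ler_sqr ?nnegrE // ltW.
Unshelve. all: by end_near. Qed.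

Lemma cvg_nonincreasing_tail (f f' : R -> R) :
  (forall t : R, 1 <= t -> is_derive t 1 f (f' t)) ->
  (forall t, 1 <= t -> f' t <= 0) ->
  (forall t, 0 <= f t) -> exists l : R, f t @[t --> +oo] --> l.
Proof.
move=> df f'0 f0; pose g t := - f (Num.max 1 t).
have g_nd : nondecreasing_fun g.
  move=> a b ab; rewrite lerN2.
  apply: (derive_le0_nonincreasing_tail df f'0); first by rewrite le_max lexx.
  by rewrite ge_max !le_max lexx ab orbT.
have g_ub : has_ubound (range g) by exists 0 => _ [t _ <-]; rewrite oppr_le0.
exists (- sup (range g)).
apply: cvg_trans (cvgN (nondecreasing_cvgr g_nd g_ub)).
apply: near_eq_cvg; near=> t.
have t1 : 1 <= t by near: t; exact: nbhs_pinfty_ge.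
by rewrite /= /g opprK max_r.
Unshelve. all: by end_near. Qed.

Lemma barbalat (f f' : R -> R) (l : R) :
  (forall t : R, 1 <= t -> is_derive t 1 f (f' t)) ->
  f t @[t --> +oo] --> l -> lipschitz_tail f' -> f' t @[t --> +oo] --> 0.
Proof.
move=> df /cvgrPdist_le fl [k f'k]; apply/cvgr0Pnorm_le => e e0.
pose K := `|k| + 1; have K0 : 0 < K by rewrite ltr_wpDl.
pose h := e / (2 * K); have h0 : 0 < h by rewrite divr_gt0 // mulr_gt0.
have Kh : K * h = e / 2 by rewrite /h; field; rewrite gt_eqF.
have he0 : 0 < h * e / 4 by rewrite divr_gt0 // mulr_gt0.
have [T [_ fT]] := fl _ he0.
exists (Num.max T 1); split; first by rewrite num_real.
move=> t; rewrite gt_max => /andP[Tt /ltW t1].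
(* the mean value theorem bounds f' somewhere in [t, t + h], and the Lipschitz
   bound carries this back to t *)
have tth : t <= t + h by rewrite lerDl ltW.
have [|c /andP[tc cth] fc] := MVT_closed_segment (f := f) (f' := f') tth.
  by move=> u /andP[tu _]; apply: df; exact: le_trans tu.
rewrite addrAC subrr add0r in fc.
have f'c : `|f' c| * h <= h * e / 2.
  rewrite -[X in _ * X <= _](gtr0_norm h0) -normrM -fc.
  rewrite (_ : f (t + h) - f t = (l - f t) - (l - f (t + h))); last by ring.
  rewrite (le_trans (ler_normB _ _)) //.
  have := fT t Tt; have := fT (t + h) (lt_le_trans Tt tth); lra.
have f'ct : `|f' c - f' t| <= K * h.
  apply: le_trans (f'k _ _ t1 tc) _.
  have : k <= K by rewrite /K (le_trans (ler_norm k)) // lerDl.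
  have := normr_ge0 k; nra.
rewrite (_ : f' t = f' c - (f' c - f' t)); last by ring.
rewrite (le_trans (ler_normB _ _)) //.
have := normr_ge0 (f' c); nra.
Qed.

Lemma barbalat_mx m n (f f' : R -> 'M[R]_(m, n)) :
  (forall t : R, 1 <= t -> is_derive t 1 f (f' t)) ->
  f t @[t --> +oo] --> (0 : 'M[R]_(m, n)) -> lipschitz_tail f' ->
  f' t @[t --> +oo] --> (0 : 'M[R]_(m, n)).
Proof.
move=> df f0 f'lip; apply: cvg0_mx => i j.
apply: (barbalat (f := fun t => f t i j) (l := 0)).
- by move=> t t1; apply: is_derive_mx_entry; exact: df.
- exact: cvg0_mx_entry.
- exact: lipschitz_tail_mx_entry.
Qed.

End Asymptotics.

Section Circuit.
Variables (R : realType) (s r m : nat) (L Rm : 'M[R]_s) (C G : 'M[R]_r)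
  (Gam : 'M[R]_(s, r)) (B : 'M[R]_(s, m)) (Ibar : 'cV[R]_s) (ki kd : R).
Hypotheses (Lpos : posdef L) (Cpos : posdef C).

Definition accel_I (mu : 'cV[R]_m) (z : ext_state R s r m) : 'cV[R]_s :=
  invmx L *m (B *m ctrl B Ibar ki kd mu z - Gam *m stVd z - Rm *m stId z).

Definition accel_V (z : ext_state R s r m) : 'cV[R]_r :=
  invmx C *m (Gam^T *m stId z - G *m stVd z).

Definition storage (z : ext_state R s r m) : R :=
  2^-1 * (((stId z)^T *m L *m stId z) 0 0 + ((stVd z)^T *m C *m stVd z) 0 0
    + ki * ((stI z - Ibar)^T *m (B *m B^T) *m (stI z - Ibar)) 0 0).

Definition dissipation (z : ext_state R s r m) : R :=
  ((stId z)^T *m Rm *m stId z) 0 0 + ((stVd z)^T *m G *m stVd z) 0 0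
  + kd * ((stId z)^T *m (B *m B^T) *m stId z) 0 0.

Lemma ctrl0E (z : ext_state R s r m) :
  ctrl B Ibar ki kd 0 z = - (ki *: (B^T *m (stI z - Ibar)) + kd *: (B^T *m stId z)).
Proof. by rewrite /ctrl sub0r opprD. Qed.

Lemma closed_loop_is_derive mu x (t : R) :
  closed_loop L Rm C G Gam B Ibar ki kd mu x -> 0 < t ->
  [/\ is_derive t 1 (stI \o x) (stId (x t)),
      is_derive t 1 (stId \o x) (accel_I (mu t) (x t)) &
      is_derive t 1 (stVd \o x) (accel_V (x t))].
Proof.
move=> cl t0; have [[dI _ dId dVd _] [[eI _ _ _] [eId eVd _]]] := cl t t0.
split; [apply: DeriveDef dI _ | apply: DeriveDef dId _ | apply: DeriveDef dVd _];
  rewrite -derive1E //.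
- apply: (canRL (mulKmx (posdef_unitmx Lpos))).
  by rewrite -[L *m _]opprK eId opprB opprD addrA.
- exact: (canRL (mulKmx (posdef_unitmx Cpos))).
Qed.

Lemma power_balance (a a' e : 'cV[R]_s) (v v' : 'cV[R]_r) (u mu : 'cV[R]_m) :
  L^T = L -> C^T = C ->
  L *m a' = B *m u - Gam *m v - Rm *m a ->
  C *m v' = Gam^T *m a - G *m v ->
  u = mu - ki *: (B^T *m e) - kd *: (B^T *m a) ->
  2^-1 * ((a'^T *m L *m a + a^T *m L *m a') 0 0
          + (v'^T *m C *m v + v^T *m C *m v') 0 0
          + ki * (a^T *m (B *m B^T) *m e + e^T *m (B *m B^T) *m a) 0 0)
  = - ((a^T *m Rm *m a) 0 0 + (v^T *m G *m v) 0 0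
       + kd * (a^T *m (B *m B^T) *m a) 0 0)
    + (mu^T *m (B^T *m a)) 0 0.
Proof.
move=> Lsym Csym La' Cv' eu.
have e00D (M N : 'M[R]_1) : (M + N) 0 0 = M 0 0 + N 0 0 by rewrite mxE.
have e00N (M : 'M[R]_1) : (- M) 0 0 = - M 0 0 by rewrite mxE.
have e00Z c (M : 'M[R]_1) : (c *: M) 0 0 = c * M 0 0 by rewrite mxE.
rewrite !e00D (qform_swap a') Lsym (qform_swap v') Csym (qform_swap e).
rewrite trmx_mul trmxK -!(mulmxA a^T) -!(mulmxA v^T) La' Cv' eu.
rewrite !(mulmxDr, mulmxN, mulNmx, mulmxDl) -!(scalemxAr, scalemxAl).
rewrite !(e00D, e00N, e00Z) !mulmxA (qform_swap v _ a) trmxK (qform_swap mu) trmxK.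
by field.
Qed.

Lemma is_derive_storage mu x (t : R) :
  closed_loop L Rm C G Gam B Ibar ki kd mu x -> 0 < t ->
  is_derive t 1 (storage \o x)
    (- dissipation (x t) + ((mu t)^T *m out_ys B (x t)) 0 0).
Proof.
move=> cl t0; have [dI dId dVd] := closed_loop_is_derive cl t0.
have dE : is_derive t 1 (fun u => stI (x u) - Ibar) (stId (x t)).
  by have := is_deriveB dI (is_derive_cst Ibar t 1); rewrite subr0.
have dS := is_deriveZ 2^-1 (is_deriveD (is_deriveD
  (is_derive_qform L dId dId) (is_derive_qform C dVd dVd))
  (is_deriveZ ki (is_derive_qform (B *m B^T) dE dE))).
apply: (is_derive_eq dS).
apply: (power_balance Lpos.1 Cpos.1 _ _ erefl).
- by rewrite /accel_I mulKVmx // posdef_unitmx.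
- by rewrite /accel_V mulKVmx // posdef_unitmx.
Qed.

Lemma dissipation_ge_qform z : psd Rm -> psd G -> 0 <= kd ->
  ((stId z)^T *m Rm *m stId z) 0 0 <= dissipation z /\
  ((stVd z)^T *m G *m stVd z) 0 0 <= dissipation z.
Proof.
move=> [_ Rpsd] [_ Gpsd] kd0; rewrite /dissipation qform_mulmx_tr.
have := Rpsd (stId z); have := Gpsd (stVd z).
have := mulr_ge0 kd0 (dot_ge0 (B^T *m stId z)); split; lra.
Qed.

Lemma dissipation_ge0 z : psd Rm -> psd G -> 0 <= kd -> 0 <= dissipation z.
Proof.
move=> Rpsd Gpsd kd0.
exact: le_trans (Rpsd.2 _) (dissipation_ge_qform z Rpsd Gpsd kd0).1.
Qed.

Lemma storage_ge0 z : 0 <= ki -> 0 <= storage z.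
Proof.
move=> ki0; have [_ Lpsd] := posdef_psd Lpos; have [_ Cpsd] := posdef_psd Cpos.
by rewrite /storage qform_mulmx_tr mulr_ge0 ?invr_ge0 ?addr_ge0 ?mulr_ge0 ?dot_ge0.
Qed.

Lemma storage_sqr_norm_le :
  0 < ki -> exists2 c, 0 < c & forall z : ext_state R s r m,
  [/\ c * `|stId z| ^+ 2 <= storage z, c * `|stVd z| ^+ 2 <= storage z &
      c * `|B^T *m (stI z - Ibar)| ^+ 2 <= storage z].
Proof.
move=> ki0; have [cL cL0 Lc] := posdef_sqr_norm_le Lpos.
have [cC cC0 Cc] := posdef_sqr_norm_le Cpos.
pose c := Num.min cL (Num.min cC ki).
have c0 : 0 < c by rewrite !lt_min cL0 cC0 ki0.
have [cLc cCc kic] : [/\ c <= cL, c <= cC & c <= ki].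
  by rewrite !ge_min !lexx !orbT.
exists (2^-1 * c) => [|z]; first by rewrite mulr_gt0 // invr_gt0.
have := Lc (stId z); have := Cc (stVd z).
have := sqr_mx_norm_le_dot (B^T *m (stI z - Ibar)).
have := sqr_ge0 `|stId z|; have := sqr_ge0 `|stVd z|.
have := sqr_ge0 `|B^T *m (stI z - Ibar)|.
have [_ Lpsd] := posdef_psd Lpos; have := Lpsd (stId z).
have [_ Cpsd] := posdef_psd Cpos; have := Cpsd (stVd z).
rewrite /storage qform_mulmx_tr; split; nra.
Qed.

Lemma closed_loop_passive : psd Rm -> psd G -> 0 <= kd -> 0 <= ki ->
  cl_passive L Rm C G Gam B Ibar ki kd.
Proof.
move=> Rpsd Gpsd kd0 ki0; exists storage; split => [z|mu x cl t t0].
  exact: storage_ge0.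
have dS := is_derive_storage cl t0; split; first exact: ex_derive.
rewrite derive1E derive_val; have := dissipation_ge0 (x t) Rpsd Gpsd kd0; lra.
Qed.

Section Convergence.
Variable x : R -> ext_state R s r m.
Hypothesis cl : closed_loop L Rm C G Gam B Ibar ki kd (fun=> 0) x.
Hypotheses (Rpsd : psd Rm) (Gpos : posdef G) (kd_gt0 : 0 < kd) (ki_gt0 : 0 < ki).
Hypotheses (Id_damped : posdef Rm \/ \rank Gam^T = s) (B_full : \rank B = m).

Let dissipation_lb z := dissipation_ge_qform z Rpsd (posdef_psd Gpos) (ltW kd_gt0).
Let dissipation_nonneg z := dissipation_ge0 z Rpsd (posdef_psd Gpos) (ltW kd_gt0).

Let w t := B^T *m (stI (x t) - Ibar).
Let u t := ctrl B Ibar ki kd 0 (x t).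

Lemma closed_loop_is_derive_tail (t : R) : 1 <= t ->
  [/\ is_derive t 1 (stI \o x) (stId (x t)),
      is_derive t 1 (stId \o x) (accel_I 0 (x t)),
      is_derive t 1 (stVd \o x) (accel_V (x t)) &
      is_derive t 1 (storage \o x) (- dissipation (x t))].
Proof.
move=> t1; have t0 : 0 < t by exact: lt_le_trans t1.
have [dI dId dVd] := closed_loop_is_derive cl t0.
split => //; apply: is_derive_eq (is_derive_storage cl t0) _.
by rewrite /out_ys trmx0 mul0mx mxE addr0.
Qed.

Lemma storage_tail_le t : 1 <= t -> storage (x t) <= storage (x 1).
Proof.
apply: (derive_le0_nonincreasing_tail (f := storage \o x)
  (f' := fun t => - dissipation (x t))) (lexx _).
- by move=> v /closed_loop_is_derive_tail[].
- by move=> v _; rewrite oppr_le0 dissipation_nonneg.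
Qed.

Lemma closed_loop_bounded :
  [/\ bounded_tail (stId \o x), bounded_tail (stVd \o x) & bounded_tail w].
Proof.
have [c c0 Sc] := storage_sqr_norm_le ki_gt0.
split; apply: (bounded_tail_sqr (c := c) (M := storage (x 1))) => // t t1;
  apply: le_trans (storage_tail_le t1); by case: (Sc (x t)).
Qed.

Lemma bounded_ctrl : bounded_tail u.
Proof.
have [bId _ bw] := closed_loop_bounded; rewrite /u; under eq_fun do rewrite ctrl0E.
by apply/bounded_tailN/bounded_tailD; apply: bounded_tailZ => //;
  apply: bounded_tail_mulmx.
Qed.

Lemma bounded_accel :
  bounded_tail (fun t => accel_I 0 (x t)) /\ bounded_tail (fun t => accel_V (x t)).
Proof.
have [bId bVd _] := closed_loop_bounded; have bu := bounded_ctrl.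
rewrite /accel_I /accel_V; split; apply: bounded_tail_mulmx.
  by apply: bounded_tailD; [apply: bounded_tailD|]; try apply: bounded_tailN;
    apply: bounded_tail_mulmx.
by apply: bounded_tailD; try apply: bounded_tailN; apply: bounded_tail_mulmx.
Qed.

Lemma closed_loop_lipschitz :
  [/\ lipschitz_tail (stId \o x), lipschitz_tail (stVd \o x) & lipschitz_tail w].
Proof.
have [bId _ _] := closed_loop_bounded; have [bAI bAV] := bounded_accel.
split.
- by apply: lipschitz_tail_derive bAI => t /closed_loop_is_derive_tail[].
- by apply: lipschitz_tail_derive bAV => t /closed_loop_is_derive_tail[].
- apply/lipschitz_tail_mulmx/lipschitz_tailD; last exact: lipschitz_tail_cst.
  by apply: lipschitz_tail_derive bId => t /closed_loop_is_derive_tail[].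
Qed.

Lemma lipschitz_accel :
  lipschitz_tail (fun t => accel_I 0 (x t)) /\
  lipschitz_tail (fun t => accel_V (x t)).
Proof.
have [lId lVd lw] := closed_loop_lipschitz.
have lu : lipschitz_tail u.
  rewrite /u; under eq_fun do rewrite ctrl0E.
  by apply/lipschitz_tailN/lipschitz_tailD; apply: lipschitz_tailZ => //;
    apply: lipschitz_tail_mulmx.
rewrite /accel_I /accel_V; split; apply: lipschitz_tail_mulmx.
  by apply: lipschitz_tailD; [apply: lipschitz_tailD|]; try apply: lipschitz_tailN;
    apply: lipschitz_tail_mulmx.
by apply: lipschitz_tailD; try apply: lipschitz_tailN; apply: lipschitz_tail_mulmx.
Qed.

Lemma dissipation_cvg0 : dissipation (x t) @[t --> +oo] --> 0.
Proof.
have [l Sl] : exists l : R, storage (x t) @[t --> +oo] --> l.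
  apply: (cvg_nonincreasing_tail (f' := fun t => - dissipation (x t))).
  - by move=> t /closed_loop_is_derive_tail[].
  - by move=> t _; rewrite oppr_le0 dissipation_nonneg.
  - by move=> t; rewrite storage_ge0 // ltW.
apply: (barbalat (f := fun t => - storage (x t)) (l := - l)).
- move=> t /closed_loop_is_derive_tail[_ _ _ dS].
  by rewrite -[dissipation _]opprK; apply: is_deriveN.
- exact: cvgN.
have [bId bVd _] := closed_loop_bounded; have [lId lVd _] := closed_loop_lipschitz.
by rewrite /dissipation; apply: lipschitz_tailD; [apply: lipschitz_tailD|
  apply: lipschitz_tailZ]; apply: lipschitz_tail_qform.
Qed.

Lemma stVd_cvg0 : stVd (x t) @[t --> +oo] --> (0 : 'cV[R]_r).
Proof.
have [c c0 Gc] := posdef_sqr_norm_le Gpos.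
apply: (cvg0_sqr_norm_le c0 _ dissipation_cvg0) => t _.
exact: le_trans (Gc _) (dissipation_lb _).2.
Qed.

Lemma stId_cvg0 : stId (x t) @[t --> +oo] --> (0 : 'cV[R]_s).
Proof.
case: Id_damped => [Rpos|rG].
  have [c c0 Rc] := posdef_sqr_norm_le Rpos.
  apply: (cvg0_sqr_norm_le c0 _ dissipation_cvg0) => t _.
  exact: le_trans (Rc _) (dissipation_lb _).1.
have AV0 : accel_V (x t) @[t --> +oo] --> (0 : 'cV[R]_r).
  apply: (barbalat_mx (f := stVd \o x)); last exact: lipschitz_accel.2.
    by move=> t /closed_loop_is_derive_tail[].
  exact: stVd_cvg0.
have /row_freeP[Y GY] : row_free Gam by rewrite /row_free -mxrank_tr rG.
have -> : (fun t => stId (x t)) =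
    (fun t => Y^T *m (C *m accel_V (x t) + G *m stVd (x t))).
  apply/funext => t; rewrite /accel_V mulKVmx ?posdef_unitmx // subrK.
  by rewrite mulmxA -trmx_mul GY trmx1 mul1mx.
apply: cvg0_mulmx; rewrite -[X in _ --> X](addr0 0).
by apply: cvgD; apply: cvg0_mulmx => //; exact: stVd_cvg0.
Qed.

Lemma accel_I_cvg0 : accel_I 0 (x t) @[t --> +oo] --> (0 : 'cV[R]_s).
Proof.
apply: (barbalat_mx (f := stId \o x)); last exact: lipschitz_accel.1.
  by move=> t /closed_loop_is_derive_tail[].
exact: stId_cvg0.
Qed.

Lemma B_left_inverse :
  exists X : 'M[R]_(s, m), B^T *m X = 1%:M /\ X^T *m B = 1%:M.
Proof.
have /row_freeP[X BX] : row_free B^T by rewrite /row_free mxrank_tr B_full.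
by exists X; split => //; rewrite -[B]trmxK -trmx_mul BX trmx1.
Qed.

Lemma ctrl_cvg0 : u t @[t --> +oo] --> (0 : 'cV[R]_m).
Proof.
have [X [_ XB]] := B_left_inverse.
have -> : u = (fun t => X^T *m
    (L *m accel_I 0 (x t) + Rm *m stId (x t) + Gam *m stVd (x t))).
  apply/funext => t; rewrite /accel_I mulKVmx ?posdef_unitmx // !subrK.
  by rewrite mulmxA XB mul1mx.
apply: cvg0_mulmx; rewrite -[X in _ --> X](addr0 0).
apply: cvgD; last exact: cvg0_mulmx stVd_cvg0.
rewrite -[X in _ --> X](addr0 0).
by apply: cvgD; apply: cvg0_mulmx; [exact: accel_I_cvg0 | exact: stId_cvg0].
Qed.

Lemma w_cvg0 : w t @[t --> +oo] --> (0 : 'cV[R]_m).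
Proof.
have -> : w = (fun t => (- ki^-1) *: (u t + kd *: (B^T *m stId (x t)))).
  apply/funext => t; rewrite /u ctrl0E opprD subrK scaleNr scalerN opprK.
  by rewrite scalerA mulVf ?gt_eqF // scale1r.
rewrite -(scaler0 _ (- ki^-1)); apply: cvgZ; first exact: cvg_cst.
rewrite -[X in _ --> X](addr0 0); apply: cvgD; first exact: ctrl_cvg0.
rewrite -(scaler0 _ kd); apply: cvgZ; first exact: cvg_cst.
by apply: cvg0_mulmx; exact: stId_cvg0.
Qed.

Lemma closed_loop_converges : converges_to_set x (target_set B Ibar ki kd).
Proof.
have [X [BX _]] := B_left_inverse.
move=> e e0.
have [T [_ HT]] : \forall t \near +oo,
    [/\ `|stId (x t)| < e, `|stVd (x t)| < e & `|X *m w t| < e].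
  near=> t; split; near: t; apply: cvgr0_norm_lt => //.
  - exact: stId_cvg0.
  - exact: stVd_cvg0.
  - exact: cvg0_mulmx w_cvg0.
exists (T + 1) => t Tt.
have [|Id_e Vd_e Xw_e] := HT t; first by apply: lt_le_trans Tt; rewrite ltrDl.
have BXw0 : B^T *m (stI (x t) - X *m w t - Ibar) = 0.
  by rewrite addrAC mulmxBr mulmxA BX mul1mx /w subrr.
(* correct I by X w, X a right inverse of B^T *)
exists ((((stI (x t) - X *m w t, stV (x t)), 0), 0), stus (x t)).
  by split => //; rewrite ctrl0E /stI /stId /= BXw0 mulmx0 !scaler0 addr0 oppr0.
move: (X *m w t) Xw_e => P P_e.
move: Id_e Vd_e; rewrite /stI /stV /stId /stVd /stus.
case: (x t) => [[[[I V] Id] Vd] us] /= Id_e Vd_e.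
split; [split; [split; [split|]|]|];
  rewrite -?ball_normE /ball_ /= ?subrr ?normr0 //.
- by rewrite addrAC subrr add0r normrN.
- by rewrite sub0r normrN.
- by rewrite sub0r normrN.
Unshelve. all: by end_near. Qed.

End Convergence.

End Circuit.

Theorem theorem1 (R : realType) (s r m : nat)
  (L Rm : 'M[R]_s) (C G : 'M[R]_r) (Gam : 'M[R]_(s, r)) (B : 'M[R]_(s, m))
  (Vstar : 'cV[R]_r) (ubar : 'cV[R]_m) (Ibar : 'cV[R]_s) (ki kd : R) :
  \rank B = m ->
  posdef L -> posdef C -> psd Rm -> psd G ->
  (forall i, 0 <= Vstar i 0) ->
  0 = Gam *m Vstar + Rm *m Ibar - B *m ubar ->
  0 = Gam^T *m Ibar - G *m Vstar ->
  0 < kd -> 0 < ki ->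
  cl_passive L Rm C G Gam B Ibar ki kd /\
  (forall x : R -> ext_state R s r m,
     closed_loop L Rm C G Gam B Ibar ki kd (fun _ => 0) x ->
     ((posdef Rm /\ posdef G) \/ (posdef G /\ \rank (Gam^T) = s)) ->
     converges_to_set x (@target_set R s r m B Ibar ki kd)).
Proof.
move=> B_full Lpos Cpos Rpsd Gpsd _ _ _ kd_gt0 ki_gt0; split.
  exact: closed_loop_passive (ltW kd_gt0) (ltW ki_gt0).
move=> x cl damped.
have [Gpos Id_damped] : posdef G /\ (posdef Rm \/ \rank Gam^T = s).
  by case: damped => [[? ?] | [? ?]]; split => //; [left | right].
exact: (closed_loop_converges Lpos Cpos cl Rpsd Gpos kd_gt0 ki_gt0 Id_damped B_full).
Qed.
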